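(* Let $p$ be a prime, let $n,d\in\mathbb{Z}_{\ge1}$ and let $\tilde R\in\mathbb{P}^d(\mathbb{Z}/p^n\mathbb{Z})$. Let $v=(r_0,\dots,r_d)\in\mathbb{Z}^{d+1}\setminus\{0\}$ be primitive, i.e. $\gcd(r_0,\dots,r_d)=1$, such that $R=(r_0:\dots:r_d)\in\mathbb{P}^d(\mathbb{Q})$ reduces to $\tilde R$ modulo $p^n$. Then the lattice $L\subset\mathbb{Z}^{d+1}$ generated by $\{v\}\cup\{p^ne_i:0\le i\le d\}$ contains every vector $w\in\mathbb{Z}^{d+1}\setminus\{0\}$ such that the corresponding point of $\mathbb{P}^d(\mathbb{Q})$ reduces modulo $p^n$ to $\tilde R$. Moreover, if $u=a_0v+p^n(a_1e_0+a_2e_1+\cdots+a_{d+1}e_d)\in L$ with $a_0,\dots,a_{d+1}\in\mathbb{Z}$ and $p\nmid a_0$, then the point of $\mathbb{P}^d(\mathbb{Q})$ with coordinate vector $u$ reduces modulo $p^n$ to $\tilde R$.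
   Context: $e_0,\dots,e_d$ is the standard basis of $\mathbb{Z}^{d+1}$. The reduction of a point of $\mathbb{P}^d(\mathbb{Q})$ modulo $p^n$ is obtained by reducing a primitive integer coordinate vector modulo $p^n$. *)

From mathcomp Require Import all_boot all_order all_algebra.
Set Implicit Arguments. Unset Strict Implicit. Unset Printing Implicit Defensive.
Import Order.TTheory GRing.Theory Num.Theory.
Local Open Scope ring_scope.

Definition vgcd (d : nat) (x : 'I_d.+1 -> int) : nat :=
  \big[gcdn/0%N]_(i < d.+1) `|x i|%N.

Definition primitive (d : nat) (x : 'I_d.+1 -> int) : Prop := vgcd x = 1%N.

(* the primitive integer coordinate vector of the point (x_0 : ... : x_d),
   x nonzero (determined up to sign) *)
Definition prim_part (d : nat) (x : 'I_d.+1 -> int) : 'I_d.+1 -> int :=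
  fun i => (x i %/ (vgcd x)%:Z)%Z.

(* A representative of a point of P^d(Z/p^nZ): an integer vector whose
   reduction mod p^n has some unit coordinate (i.e. not divisible by p). *)
Definition proj_rep (p n d : nat) (rt : 'I_d.+1 -> int) : Prop :=
  exists i : 'I_d.+1, ~~ (p%:Z %| rt i)%Z.

(* two vectors mod p^n define the same point of P^d(Z/p^nZ):
   they differ by a unit of Z/p^nZ *)
Definition proj_eq_mod (p n d : nat) (x y : 'I_d.+1 -> int) : Prop :=
  exists lam : int, ~~ (p%:Z %| lam)%Z /\
    forall i : 'I_d.+1, (x i == lam * y i %[mod (p ^ n)%:Z])%Z.

(* the point of P^d(Q) with coordinate vector x (nonzero) reduces modulo p^n
   to the point of P^d(Z/p^nZ) represented by rt: reduce the primitive
   integer coordinate vector of the point modulo p^n *)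
Definition reduces_to (p n d : nat) (x rt : 'I_d.+1 -> int) : Prop :=
  proj_eq_mod p n (prim_part x) rt.

Definition in_lattice (p n d : nat) (v w : 'I_d.+1 -> int) : Prop :=
  exists (a0 : int) (a : 'I_d.+1 -> int),
    forall i : 'I_d.+1, w i = a0 * v i + (p ^ n)%:Z * a i.

From mathcomp Require Import all_boot all_order all_algebra.
Import Order.TTheory GRing.Theory Num.Theory.
Local Open Scope ring_scope.

(* Being congruent modulo p^n up to a factor prime to p is an equivalence
   relation, since such factors are invertible modulo p^n.  A vector w
   differs from its primitive part by the factor gcd(w); hence if w reduces
   to the same point as v, then w is congruent to c v modulo p^n for some
   integer c, i.e. w lies in the lattice.  Conversely u = a0 v + p^n a is
   congruent to a0 v, and gcd(u) is prime to p because p cannot divide all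
   the coordinates of the primitive vector v; so the primitive part of u is
   congruent to v up to a unit as well. *)

Section CongruenceModPrimePower.

Set Implicit Arguments.
Unset Strict Implicit.

Variables (p n d : nat).
Hypotheses (p_prime : prime p) (n_gt0 : (0 < n)%N).
Local Notation P := (p ^ n)%:Z.
Implicit Types (x y z v w a : 'I_d.+1 -> int) (c : int).

Lemma prime_ndvdz_mul (c c' : int) :
  ~~ (p%:Z %| c)%Z -> ~~ (p%:Z %| c')%Z -> ~~ (p%:Z %| c * c')%Z.
Proof.
by rewrite !dvdzE abszM absz_nat Euclid_dvdM // => /negPf-> /negPf->.
Qed.

Lemma dvdz_vgcd x i : ((vgcd x)%:Z %| x i)%Z.
Proof. by rewrite dvdzE absz_nat (biggcdn_inf i). Qed.

Lemma mul_vgcd_prim_part x i : (vgcd x)%:Z * prim_part x i = x i.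
Proof. by rewrite /prim_part mulrC divzK ?dvdz_vgcd. Qed.

Lemma reduces_to_primitive x y :
  primitive x -> reduces_to p n x y -> proj_eq_mod p n x y.
Proof.
move=> x_prim [lam [lam_p xy]]; exists lam; split=> // i.
by move: (xy i); rewrite /prim_part x_prim divz1.
Qed.

Lemma dvdz_prime_pexp : (p%:Z %| P)%Z.
Proof. by rewrite dvdzE !absz_nat dvdn_exp. Qed.

Lemma coprimez_pexp c : ~~ (p%:Z %| c)%Z -> coprimez c P.
Proof.
move=> c_p; rewrite coprimezE absz_nat coprimeXr // coprime_sym.
by rewrite prime_coprime // -(absz_nat p) -dvdzE.
Qed.

Lemma proj_eq_mod_trans x y z :
  proj_eq_mod p n x y -> proj_eq_mod p n y z -> proj_eq_mod p n x z.
Proof.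
move=> [lam [lam_p xy]] [mu [mu_p yz]]; exists (lam * mu).
split=> [|i]; first exact: prime_ndvdz_mul.
by apply/eqP; rewrite (eqP (xy i)) -modzMmr (eqP (yz i)) modzMmr mulrA.
Qed.

Lemma proj_eq_mod_sym x y : proj_eq_mod p n x y -> proj_eq_mod p n y x.
Proof.
move=> [lam [lam_p xy]].
have /coprimezP [[u t] /= bezout] := coprimez_pexp lam_p.
have u_p : ~~ (p%:Z %| u)%Z.
  apply/negP => p_u.
  have := rpredD (dvdz_mulr lam p_u) (dvdz_mull t dvdz_prime_pexp).
  by rewrite bezout dvdzE absz_nat dvdn1 gtn_eqF ?prime_gt1.
exists u; split=> // i; apply/eqP.
have -> : y i = (t * y i) * P + u * (lam * y i).
  by rewrite mulrAC mulrA -mulrDl addrC bezout mul1r.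
by rewrite modzMDl -[RHS]modzMmr (eqP (xy i)) modzMmr.
Qed.

Lemma in_lattice_of_eqmod c v w :
  (forall i, w i = c * v i %[mod P])%Z -> in_lattice p n v w.
Proof.
move=> wv; exists c, (fun i => (w i - c * v i) %/ P)%Z => i.
rewrite [P * _]mulrC divzK; first by rewrite addrC subrK.
by rewrite -eqz_mod_dvd; apply/eqP.
Qed.

Lemma proj_eq_mod_lattice_vector c v a : ~~ (p%:Z %| c)%Z ->
  proj_eq_mod p n (fun i => c * v i + P * a i) v.
Proof.
by move=> c_p; exists c; split=> // i; apply/eqP; rewrite addrC mulrC modzMDl.
Qed.

Lemma proj_eq_mod_prim_part x :
  ~~ (p%:Z %| (vgcd x)%:Z)%Z -> proj_eq_mod p n (prim_part x) x.
Proof.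
move=> gcd_p; apply: proj_eq_mod_sym; exists (vgcd x); split=> // i.
by rewrite mul_vgcd_prim_part.
Qed.

Lemma ndvdz_vgcd_lattice c v a : primitive v -> ~~ (p%:Z %| c)%Z ->
  ~~ (p%:Z %| (vgcd (fun i => c * v i + P * a i))%:Z)%Z.
Proof.
move=> v_prim c_p; apply/negP => p_gcd.
suff : (p %| vgcd v)%N by rewrite v_prim dvdn1 gtn_eqF ?prime_gt1.
apply/dvdn_biggcdP => i _; rewrite -(absz_nat p) -dvdzE.
have p_cv : (p%:Z %| c * v i)%Z.
  have p_ci := dvdz_trans p_gcd (dvdz_vgcd _ i).
  rewrite -[c * v i](addrK (P * a i)) rpredB //.
  exact: dvdz_mulr dvdz_prime_pexp.
by apply: contraLR p_cv; apply: prime_ndvdz_mul.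
Qed.

End CongruenceModPrimePower.

Theorem lemma3p11 (p n d : nat) (rt v : 'I_d.+1 -> int) :
  prime p -> (1 <= n)%N -> (1 <= d)%N ->
  proj_rep p n rt ->
  (exists i, v i != 0) -> primitive v -> reduces_to p n v rt ->
  (forall w : 'I_d.+1 -> int, (exists i, w i != 0) ->
     reduces_to p n w rt -> in_lattice p n v w)
  /\
  (forall (a0 : int) (a : 'I_d.+1 -> int), ~~ (p%:Z %| a0)%Z ->
     reduces_to p n (fun i => a0 * v i + (p ^ n)%:Z * a i) rt).
Proof.
move=> p_prime n_gt0 _ _ _ v_prim /(reduces_to_primitive v_prim) v_rt.
have rt_v := proj_eq_mod_sym p_prime n_gt0 v_rt.
split=> [w _ w_rt | a0 a a0_p].
- have [mu [_ wv]] := proj_eq_mod_trans p_prime w_rt rt_v.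
  apply: (in_lattice_of_eqmod (c := (vgcd w)%:Z * mu)) => i.
  by rewrite -mul_vgcd_prim_part -mulrA -modzMmr (eqP (wv i)) modzMmr.
- have gcd_p := ndvdz_vgcd_lattice p_prime n_gt0 a v_prim a0_p.
  have lat_v := proj_eq_mod_lattice_vector n v a a0_p.
  have prim_lat := proj_eq_mod_prim_part p_prime n_gt0 gcd_p.
  have lat_rt := proj_eq_mod_trans p_prime lat_v v_rt.
  exact: (proj_eq_mod_trans p_prime prim_lat lat_rt).
Qed.
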